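(* Let $V=\mathbb{C}^n$ and let $d>2$. Let $T\in S^d(V)\subset V^{\otimes d}$ be a symmetric tensor. (1) Suppose there exists $k\in\{1,\dots,d-1\}$ such that $\operatorname{rank}(T)\le \operatorname{f-rank}_{[1,\dots,k],[k+1,\dots,d]}(T)$. Then every minimal decomposition of $T$ is symmetric. (2) Let $D=\{a_i\}_i$ be a decomposition of $T$. Assume that for every subset $I\subset\{1,\dots,d\}$ with $|I|=d-2$ the set $D^{(I)}$ is linearly independent. Then $D$ is symmetric.
   Context: A decomposition of $T\in S^d(V)$ is a finite set $D=\{a_i\}_i$ of rank-one tensors $a_i=a_i^{(1)}\otimes\cdots\otimes a_i^{(d)}$ with $a_i^{(k)}\in V$, such that $T=\sum_i a_i$. It is minimal if the number of terms equals $\operatorname{rank}(T)$, the minimal number of rank-one tensors summing to $T$. A decomposition is symmetric if every $a_i$ lies in $S^d(V)$ (i.e. is a symmetric tensor). For $I\subset\{1,\dots,d\}$ with complement $I^C$, $\operatorname{f-rank}_{I,I^C}(T)$ denotes the rank of $T$ viewed as a matrix (element of $(\bigotimes_{j\in I}V)\otimes(\bigotimes_{j\in I^C}V)$) obtained by grouping the indices in $I$ and in $I^C$. For a decomposition $D$, $D^{(I)}=\{\bigotimes_{j\in I}a_i^{(j)}\}_i$. *)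

From mathcomp Require Import all_boot all_order all_algebra all_fingroup.
From mathcomp Require Import reals complex.
Set Implicit Arguments. Unset Strict Implicit. Unset Printing Implicit Defensive.
Import GRing.Theory.
Local Open Scope ring_scope.

(* A tensor T in V^{(x)d}, V = F^n, is given by its coordinates
   T x, x : {ffun 'I_d -> 'I_n} a multi-index (x k = index in the k-th factor). *)
Definition tensor (F : Type) (n d : nat) := {ffun 'I_d -> 'I_n} -> F.

Definition rank_one (F : comNzRingType) (n d : nat) (f : 'I_d -> 'rV[F]_n)
  : tensor F n d := fun x => \prod_(k < d) f k 0 (x k).

(* Partial product  (x)_{j in I} f j , viewed as a tensor on all d slots that
   depends only on the slots in I (i.e. an element of V^{(x)I}). *)
Definition rank_one_on (F : comNzRingType) (n d : nat) (I : {set 'I_d})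
  (f : 'I_d -> 'rV[F]_n) : tensor F n d := fun x => \prod_(k in I) f k 0 (x k).

Definition symmetric_tensor (F : Type) (n d : nat) (T : tensor F n d) : Prop :=
  forall (s : 'S_d) (x : {ffun 'I_d -> 'I_n}), T [ffun k => x (s k)] = T x.

Definition is_decomposition (F : comNzRingType) (n d r : nat)
  (a : 'I_r -> 'I_d -> 'rV[F]_n) (T : tensor F n d) : Prop :=
  forall x, T x = \sum_(i < r) rank_one (a i) x.

Definition has_decomposition (F : comNzRingType) (n d r : nat) (T : tensor F n d) : Prop :=
  exists a : 'I_r -> 'I_d -> 'rV[F]_n, is_decomposition a T.

Definition tensor_rank (F : comNzRingType) (n d : nat) (T : tensor F n d) (r : nat) : Prop :=
  has_decomposition r T /\ forall r', has_decomposition r' T -> (r <= r')%N.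

Definition symmetric_decomposition (F : comNzRingType) (n d r : nat)
  (a : 'I_r -> 'I_d -> 'rV[F]_n) : Prop :=
  forall i, symmetric_tensor (rank_one (a i)).

(* Its rows/columns are
   indexed by full multi-indices, so rows (columns) with equal restriction to
   I (to I^C) are repeated; the rank is that of the usual flattening. *)
Definition glue (n d : nat) (I : {set 'I_d}) (x y : {ffun 'I_d -> 'I_n})
  : {ffun 'I_d -> 'I_n} := [ffun j => if j \in I then x j else y j].

Definition flattening (F : comNzRingType) (n d : nat) (I : {set 'I_d}) (T : tensor F n d)
  : 'M[F]_(#|{ffun 'I_d -> 'I_n}|, #|{ffun 'I_d -> 'I_n}|) :=
  \matrix_(i, j) T (glue I (enum_val i) (enum_val j)).

Definition frank (F : fieldType) (n d : nat) (I : {set 'I_d}) (T : tensor F n d) : nat :=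
  \rank (flattening I T).

Definition lin_indep_restr (F : comNzRingType) (n d r : nat) (I : {set 'I_d})
  (a : 'I_r -> 'I_d -> 'rV[F]_n) : Prop :=
  forall c : 'I_r -> F,
    (forall x, \sum_(i < r) c i * rank_one_on I (a i) x = 0) -> forall i, c i = 0.

(** If [D^(J)] is linearly
    independent and a permutation [s] of the slots fixes [J] pointwise, compare
    [T] with [T o s] at multi-indices glued from [x] on [J] and [y] off [J]: the
    factors on [J] are the same on both sides, so independence of [D^(J)] gives
    termwise equality of the factors off [J], i.e. every term [a_i] is
    [s]-invariant.  Part (2) follows by taking for [J] the complement of a
    transposition.  For part (1), [r <= f-rank] forces both [D^(P)] and [D^(P^C)]
    to be independent, where [P = [1..k]], so each term is invariant under the
    transpositions preserving the two sides of [P]; since permuting the slots of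
    a decomposition of a symmetric tensor yields another decomposition with the
    same number of terms, the terms are also invariant under all conjugates of
    these transpositions, and for [d > 2] these are all transpositions. *)
From mathcomp Require Import all_boot all_order all_algebra all_fingroup.
From mathcomp Require Import reals complex.
Set Implicit Arguments. Unset Strict Implicit. Unset Printing Implicit Defensive.
Import GRing.Theory.
Local Open Scope ring_scope.

Lemma tperm_conj_same_side (T : finType) (P : {set T}) (j l : T) :
  (2 < #|T|)%N ->
  exists u v (s : {perm T}), (u \in P) = (v \in P) /\ tperm j l = (tperm u v ^ s)%g.
Proof.
move=> hT; have [-> | jl] := eqVneq j l.
  by exists l, l, 1%g; rewrite conjg1.
have /set0Pn[m] : ~: [set j; l] != set0.
  rewrite -card_gt0 -(ltn_add2l #|[set j; l]|) addn0 cardsC.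
  by rewrite cards2 jl.
rewrite !inE negb_or => /andP[mj ml].
(* Two of the three distinct points [m], [j], [l] lie on the same side of [P]. *)
case: (boolP ((m \in P) == (j \in P))) => [/eqP mPj | ].
  by exists m, j, (tperm m l); rewrite tpermJ_tperm 1?tpermC // eq_sym.
case: (boolP ((m \in P) == (l \in P))) => [/eqP mPl _ | ].
  by exists m, l, (tperm m j); rewrite tpermJ_tperm.
by move=> mPl mPj; exists j, l, 1%g; rewrite conjg1; move: mPl mPj;
  case: (m \in P) (j \in P) (l \in P) => [] [] [].
Qed.

Section RankOne.

Variables (F : comNzRingType) (n d : nat).
Implicit Types (f : 'I_d -> 'rV[F]_n) (x y : {ffun 'I_d -> 'I_n}) (s : 'S_d).

Definition perm_invariant (T : tensor F n d) s : Prop :=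
  forall x, T [ffun k => x (s k)] = T x.

Lemma perm_invariantM (T : tensor F n d) s t :
  perm_invariant T s -> perm_invariant T t -> perm_invariant T (s * t)%g.
Proof.
move=> hs ht x; rewrite -(ht x) -(hs [ffun k => x (t k)]).
by congr T; apply/ffunP => k; rewrite !ffunE permM.
Qed.

Lemma symmetric_tensor_tperm (T : tensor F n d) :
  (forall j l : 'I_d, perm_invariant T (tperm j l)) -> symmetric_tensor T.
Proof.
move=> htp s; have [ts -> _] := prod_tpermP s.
elim: ts => [|t ts IH] x; last by rewrite big_cons; apply: perm_invariantM.
by rewrite big_nil; congr T; apply/ffunP => k; rewrite ffunE perm1.
Qed.

Lemma rank_one_glue (I : {set 'I_d}) f x y :
  rank_one f (glue I x y) = rank_one_on I f x * rank_one_on (~: I) f y.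
Proof.
rewrite /rank_one /glue (bigID (mem I)) /=; congr (_ * _).
  by apply: eq_bigr => k kI; rewrite ffunE kI.
by apply: eq_big => [k|k]; rewrite ?inE // ffunE => /negbTE ->.
Qed.

Lemma glue_id (I : {set 'I_d}) x : glue I x x = x.
Proof. by apply/ffunP => k; rewrite ffunE; case: ifP. Qed.

Lemma glue_perm_fix (J : {set 'I_d}) s x y : {in J, s =1 id} ->
  [ffun k => glue J x y (s k)] = glue J x [ffun k => y (s k)].
Proof.
move=> sJ; apply/ffunP => k; rewrite /glue !ffunE.
case: (boolP (k \in J)) => [kJ | kJ]; first by rewrite sJ // kJ.
have skJ : s k \notin J.
  by apply: contra kJ => skJ; rewrite -(perm_inj (sJ _ skJ)).
by rewrite (negbTE skJ).
Qed.

Lemma rank_one_perm f s y :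
  rank_one f y = rank_one (fun k => f (s k)) [ffun k => y (s k)].
Proof.
rewrite /rank_one (reindex_inj (@perm_inj _ s)) /=.
by apply: eq_bigr => k _; rewrite ffunE.
Qed.

Lemma perm_invariant_conj f s t :
  perm_invariant (rank_one (fun k => f (s k))) t ->
  perm_invariant (rank_one f) (t ^ s)%g.
Proof.
move=> ht x; rewrite [LHS](rank_one_perm _ s) [RHS](rank_one_perm _ s) -[RHS]ht.
by congr rank_one; apply/ffunP => k; rewrite !ffunE conjgE !permM permK.
Qed.

End RankOne.

Section Decomposition.

Variables (F : comNzRingType) (n d r : nat).
Variables (a : 'I_r -> 'I_d -> 'rV[F]_n) (T : tensor F n d).
Hypotheses (hT : symmetric_tensor T) (hD : is_decomposition a T).

Lemma is_decomposition_perm (s : 'S_d) : is_decomposition (fun i k => a i (s k)) T.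
Proof.
move=> x; rewrite -(hT s^-1%g x) hD; apply: eq_bigr => i _.
rewrite (rank_one_perm _ s); congr rank_one.
by apply/ffunP => k; rewrite !ffunE permK.
Qed.

Lemma lin_indep_restr_perm_invariant (J : {set 'I_d}) (s : 'S_d) :
  lin_indep_restr J a -> {in J, s =1 id} ->
  forall i, perm_invariant (rank_one (a i)) s.
Proof.
move=> hJ sJ.
have invC (y : {ffun 'I_d -> 'I_n}) i :
    rank_one_on (~: J) (a i) [ffun k => y (s k)] = rank_one_on (~: J) (a i) y.
  apply/eqP; rewrite -subr_eq0; apply/eqP; move: i; apply: hJ => x.
  have := hT s (glue J x y); rewrite !hD glue_perm_fix // => e.
  rewrite (eq_bigr (fun i => rank_one (a i) (glue J x [ffun k => y (s k)]) -
                             rank_one (a i) (glue J x y))); first by rewrite sumrB e subrr.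
  by move=> i _; rewrite !rank_one_glue mulrBl !(mulrC (rank_one_on J _ _)).
move=> i x; rewrite -{1}(glue_id J x) glue_perm_fix // rank_one_glue invC.
by rewrite -rank_one_glue glue_id.
Qed.

Lemma symmetric_decomposition_lin_indep_restr :
  (forall I : {set 'I_d}, #|I| = (d - 2)%N -> lin_indep_restr I a) ->
  symmetric_decomposition a.
Proof.
move=> hI i; apply: symmetric_tensor_tperm => j l.
have [<- | jl] := eqVneq j l.
  by rewrite tperm1 => x; congr rank_one; apply/ffunP => k; rewrite ffunE perm1.
apply: (@lin_indep_restr_perm_invariant (~: [set j; l])).
  by apply: hI; rewrite cardsCs setCK card_ord cards2 jl.
by move=> k; rewrite !inE negb_or => /andP[kj kl]; rewrite tpermD // eq_sym.
Qed.

End Decomposition.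

Definition restr_mx (F : comNzRingType) (n d r : nat) (I : {set 'I_d})
    (a : 'I_r -> 'I_d -> 'rV[F]_n) : 'M[F]_(r, #|{ffun 'I_d -> 'I_n}|) :=
  \matrix_(i, v) rank_one_on I (a i) (enum_val v).

Lemma flattening_decomposition (F : comNzRingType) (n d r : nat) (I : {set 'I_d})
    (a : 'I_r -> 'I_d -> 'rV[F]_n) (T : tensor F n d) :
  is_decomposition a T -> flattening I T = (restr_mx I a)^T *m restr_mx (~: I) a.
Proof.
move=> hD; apply/matrixP => u v; rewrite !mxE hD; apply: eq_bigr => i _.
by rewrite !mxE rank_one_glue.
Qed.

Lemma row_free_lin_indep_restr (F : fieldType) (n d r : nat) (I : {set 'I_d})
    (a : 'I_r -> 'I_d -> 'rV[F]_n) :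
  row_free (restr_mx I a) -> lin_indep_restr I a.
Proof.
move=> hfree c hc i.
have : (\row_j c j) *m restr_mx I a = 0 *m restr_mx I a.
  rewrite mul0mx; apply/rowP => v; rewrite !mxE -[RHS](hc (enum_val v)).
  by apply: eq_bigr => j _; rewrite !mxE.
by move/(row_free_inj hfree)/rowP/(_ i); rewrite !mxE.
Qed.

Lemma lin_indep_restr_frank (F : fieldType) (n d r : nat) (I : {set 'I_d})
    (a : 'I_r -> 'I_d -> 'rV[F]_n) (T : tensor F n d) :
  is_decomposition a T -> (r <= frank I T)%N ->
  lin_indep_restr I a /\ lin_indep_restr (~: I) a.
Proof.
rewrite /frank => /flattening_decomposition -> hr.
split; apply: row_free_lin_indep_restr; rewrite -row_leq_rank (leq_trans hr) //.
  by rewrite -(mxrank_tr (restr_mx I a)) mxrankM_maxl.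
exact: mxrankM_maxr.
Qed.

Lemma symmetric_decomposition_frank (F : fieldType) (n d r : nat) (P : {set 'I_d})
    (a : 'I_r -> 'I_d -> 'rV[F]_n) (T : tensor F n d) :
  (2 < d)%N -> symmetric_tensor T -> is_decomposition a T -> (r <= frank P T)%N ->
  symmetric_decomposition a.
Proof.
move=> hd hT hD hr i; apply: symmetric_tensor_tperm => j l.
have hcard : (2 < #|'I_d|)%N by rewrite card_ord.
have [u [v [s [uv ->]]]] := tperm_conj_same_side P j l hcard.
apply: perm_invariant_conj; move: i.
have hDs := is_decomposition_perm hT hD s.
have [hP hPC] := lin_indep_restr_frank hDs hr.
have [uP | uP] := boolP (u \in P).
- apply: (lin_indep_restr_perm_invariant hT hDs hPC) => k; rewrite inE => kP.
  by rewrite tpermD //; apply: contraNneq kP => <-; rewrite -?uv.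
- apply: (lin_indep_restr_perm_invariant hT hDs hP) => k kP.
  by rewrite tpermD //; apply: contraTneq kP => <-; rewrite -?uv.
Qed.

Theorem lemma1p1 (R : realType) (n d : nat) (hd : (2 < d)%N) (T : tensor R[i] n d)
  (hT : symmetric_tensor T) :
  (* (1) *)
  (forall k : nat, (1 <= k <= d - 1)%N ->
     forall r : nat, tensor_rank T r ->
     (r <= frank [set j : 'I_d | (j < k)%N] T)%N ->
     forall a : 'I_r -> 'I_d -> 'rV[R[i]]_n,
       is_decomposition a T -> symmetric_decomposition a)
  /\
  (* (2) *)
  (forall (r : nat) (a : 'I_r -> 'I_d -> 'rV[R[i]]_n),
     is_decomposition a T ->
     (forall I : {set 'I_d}, #|I| = (d - 2)%N -> lin_indep_restr I a) ->
     symmetric_decomposition a).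
Proof.
split.
- by move=> k _ r _ hr a hD; apply: symmetric_decomposition_frank hr.
- by move=> r a hD; apply: symmetric_decomposition_lin_indep_restr.
Qed.
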